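(* Let $r$ be a positive integer and let $G$ be a graph containing the $r$-grid $W_r$ as a minor, witnessed by branch sets $V_h\subseteq V(G)$, $h\in V(W_r)$. Let $\mathcal{T}'$ be the natural tangle of $W_r$ and let $\mathcal{T}$ be its extension to $G$. Then for every separation $(A,B)\in\mathcal{T}$ of order $s$, the set $A$ meets at most $s^2$ of the branch sets $V_h$.
   Context: For a positive integer $r$, the $r$-grid $W_r$ has vertex set $\{(i,j):1\le i,j\le r\}$, with $(i,j)$ adjacent to $(i',j')$ iff $|i-i'|+|j-j'|=1$. Its $j$th column is $\{1,\dots,r\}\times\{j\}$, its $i$th row is $\{i\}\times\{1,\dots,r\}$, and the union of a row and a column is a cross. A separation of a graph is a pair $(A,B)$ of vertex sets whose union is the whole vertex set such that no edge joins $A\setminus B$ to $B\setminus A$; its order is $|A\cap B|$. The natural tangle $\mathcal{T}'$ of $W_r$ is the set of all separations $(A',B')$ of $W_r$ of order less than $r$ such that $B'$ contains a cross. That $W_r$ is a minor of $G$ witnessed by branch sets $V_h$ means the $V_h$ ($h\in V(W_r)$) are pairwise disjoint vertex sets of $G$, each inducing a connected subgraph, and $G$ has an edge between $V_h$ and $V_{h'}$ whenever $hh'$ is an edge of $W_r$. For a separation $(A,B)$ of $G$, the induced separation of $W_r$ is $(A',B'):=(\{h: V_h\cap A\neq\emptyset\},\{h:V_h\cap B\ne\emptyset\})$. The extension $\mathcal{T}$ of $\mathcal{T}'$ to $G$ is the set of all separations $(A,B)$ of $G$ of order less than $r$ whose induced separation $(A',B')$ lies in $\mathcal{T}'$. 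*)

(* finite simple graphs as symmetric irreflexive relations. *)
From mathcomp Require Import all_boot.
Set Implicit Arguments. Unset Strict Implicit. Unset Printing Implicit Defensive.

Definition absdiff (m n : nat) : nat := (m - n) + (n - m).

Definition grid_vert (r : nat) : finType := ('I_r * 'I_r)%type.
Definition grid_adj (r : nat) : rel (grid_vert r) :=
  fun h h' => absdiff h.1 h'.1 + absdiff h.2 h'.2 == 1.

Definition separation (V : finType) (e : rel V) (A B : {set V}) : Prop :=
  A :|: B = setT /\
  forall x y, x \in A :\: B -> y \in B :\: A -> ~~ e x y.

Definition sep_order (V : finType) (A B : {set V}) : nat := #|A :&: B|.

Definition cross (r : nat) (i j : 'I_r) : {set grid_vert r} :=
  [set h : grid_vert r | (h.1 == i) || (h.2 == j)].

Definition natural_tangle (r : nat) (A' B' : {set grid_vert r}) : Prop :=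
  separation (@grid_adj r) A' B' /\ sep_order A' B' < r /\
  exists i j : 'I_r, cross i j \subset B'.

Definition connected_in (V : finType) (e : rel V) (S : {set V}) : bool :=
  (S != set0) &&
  [forall x in S, forall y in S,
     connect [rel u v | [&& u \in S, v \in S & e u v]] x y].

Definition grid_minor_model (r : nat) (V : finType) (e : rel V)
    (Vh : grid_vert r -> {set V}) : Prop :=
  (forall h h', h != h' -> [disjoint Vh h & Vh h']) /\
  (forall h, connected_in e (Vh h)) /\
  (forall h h', grid_adj h h' -> [exists x in Vh h, exists y in Vh h', e x y]).

Definition induced_set (r : nat) (V : finType) (Vh : grid_vert r -> {set V})
    (A : {set V}) : {set grid_vert r} :=
  [set h | Vh h :&: A != set0].

Definition tangle_extension (r : nat) (V : finType) (e : rel V)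
    (Vh : grid_vert r -> {set V}) (A B : {set V}) : Prop :=
  separation e A B /\ sep_order A B < r /\
  natural_tangle (induced_set Vh A) (induced_set Vh B).

(* A separation of a grid whose big side contains a cross is small on its
   other side: a vertex (i, j) of A' is joined to the cross by its row and by
   its column, so both meet the separator A' :&: B'.  Hence A' lies in the
   product of the row and column projections of the separator, and
   #|A'| <= #|A' :&: B'|^2.  For the extension to G, each branch set meeting
   both A and B is connected, so it meets A :&: B; the branch sets being
   disjoint, the induced separator has at most #|A :&: B| vertices. *)
From mathcomp Require Import all_boot zify.

Set Implicit Arguments.
Unset Strict Implicit.
Unset Printing Implicit Defensive.

Section Separation.

Variables (T : finType) (e : rel T) (A B : {set T}).
Hypotheses (e_sym : symmetric e) (sepAB : separation e A B).

Lemma separation_edge_side u v :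
  e u v -> u \notin A :&: B -> v \notin A :&: B -> (u \in A) = (v \in A).
Proof.
case: sepAB => AUB no_edge euv uS vS.
have notA_inB x : x \notin A -> x \in B.
  move=> /negbTE xA; have: x \in A :|: B by rewrite AUB inE.
  by rewrite inE xA.
apply/idP/idP => [uA | vA]; apply/negPn/negP => nA.
- have uB : u \notin B by move: uS; rewrite inE uA.
  by move: (no_edge u v); rewrite !inE uA uB nA notA_inB ?euv // => /(_ isT isT).
- have vB : v \notin B by move: vS; rewrite inE vA.
  by move: (no_edge v u); rewrite !inE vA vB nA notA_inB // e_sym euv => /(_ isT isT).
Qed.

Lemma separation_closed (R : rel T) :
  (forall u v, R u v -> [&& e u v, u \notin A :&: B & v \notin A :&: B]) ->
  closed R A.
Proof. by move=> sub u v /sub /and3P[euv uS vS]; apply: separation_edge_side. Qed.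

Lemma connected_meets_separator (S : {set T}) :
  connected_in e S -> S :&: A != set0 -> S :&: B != set0 ->
  S :&: (A :&: B) != set0.
Proof.
case/andP=> _ /forall_inP S_conn /set0Pn[x /setIP[xS xA]] /set0Pn[y /setIP[yS yB]].
apply/negP => /eqP S_sep.
have notAB z : z \in S -> z \notin A :&: B.
  by move=> zS; apply/negP => zAB; have := in_set0 z; rewrite -S_sep inE zS zAB.
pose R := [rel u v | [&& u \in S, v \in S & e u v]].
have R_closed : closed R A.
  by apply: separation_closed => u v /and3P[uS vS ->]; rewrite !notAB.
have /forall_inP/(_ y yS) xy := S_conn x xS.
by have := notAB y yS; rewrite inE yB andbT -(closed_connect R_closed xy) xA.
Qed.

Lemma walk_meets_separator n (L : nat -> T) :
  (forall k, k < n -> e (L k) (L k.+1)) ->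
  forall a b, a <= n -> b <= n -> L a \in A -> L b \in B ->
  exists2 k, k <= n & L k \in A :&: B.
Proof.
move=> walk a b an bn aA bB.
case: (boolP [exists k : 'I_n.+1, L k \in A :&: B]) => [/existsP[k kS] | ].
  by exists k => //; rewrite -ltnS.
rewrite negb_exists => /forallP avoid.
have notAB k : k <= n -> L k \notin A :&: B.
  by rewrite -ltnS => kn; have := avoid (Ordinal kn).
have side k : k <= n -> (L k \in A) = (L 0 \in A).
  elim: k => [// | k IHk] kn.
  rewrite -IHk ?(ltnW kn) //; apply/esym/separation_edge_side.
  - exact: walk.
  - exact: notAB (ltnW kn).
  - exact: notAB.
by have := notAB b bn; rewrite inE bB andbT side // -(side a) // aA.
Qed.

End Separation.

Lemma card_le_disjoint_meets (I T : finType) (F : I -> {set T})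
    (J : {set I}) (X : {set T}) :
  (forall i j, i != j -> [disjoint F i & F j]) ->
  {in J, forall i, F i :&: X != set0} -> #|J| <= #|X|.
Proof.
move=> disjF meetX.
pose g i := [pick x in F i :&: X].
have gP i : i \in J -> exists2 x, g i = Some x & x \in F i :&: X.
  move=> /meetX /set0Pn[x0 x0FX]; rewrite /g.
  by case: pickP => [x xFX | /(_ x0)]; [exists x | rewrite x0FX].
have g_inj : {in J &, injective g}.
  move=> i j iJ jJ gij; have [x gi /setIP[xFi _]] := gP i iJ.
  have [y gj /setIP[yFj _]] := gP j jJ.
  move: gij; rewrite gi gj => -[xy]; apply/eqP; apply: contraTT xFi => ij.
  by rewrite xy (disjointFl (disjF _ _ ij) yFj).
rewrite -(card_in_imset g_inj) -(card_imset X Some_inj).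
apply/subset_leq_card/subsetP => _ /imsetP[i iJ ->].
by have [x -> /setIP[_ xX]] := gP i iJ; apply: imset_f.
Qed.

Lemma grid_adj_sym r : symmetric (@grid_adj r).
Proof.
by move=> u v; rewrite /grid_adj /absdiff (addnC (u.1 - v.1)) (addnC (u.2 - v.2)).
Qed.

Lemma grid_adj_row r (i : 'I_r.+1) k :
  k < r -> grid_adj (i, inord k) (i, inord k.+1).
Proof. by move=> kr; rewrite /grid_adj /absdiff /= subnn !inordK //; lia. Qed.

Lemma grid_adj_col r (j : 'I_r.+1) k :
  k < r -> grid_adj (inord k, j) (inord k.+1, j).
Proof. by move=> kr; rewrite /grid_adj /absdiff /= subnn !inordK //; lia. Qed.

Section GridSeparation.

Variables (r : nat) (A' B' : {set grid_vert r.+1}).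
Hypothesis sepAB' : separation (@grid_adj r.+1) A' B'.

Lemma row_meets_separator (i j j' : 'I_r.+1) :
  (i, j) \in A' -> (i, j') \in B' -> exists j'', (i, j'') \in A' :&: B'.
Proof.
rewrite -[j]inord_val -[j']inord_val => ijA ij'B.
have [k _ ikS] := walk_meets_separator (@grid_adj_sym _) sepAB'
  (@grid_adj_row r i) (leq_ord j) (leq_ord j') ijA ij'B.
by exists (inord k).
Qed.

Lemma col_meets_separator (i i' j : 'I_r.+1) :
  (i, j) \in A' -> (i', j) \in B' -> exists i'', (i'', j) \in A' :&: B'.
Proof.
rewrite -[i]inord_val -[i']inord_val => ijA i'jB.
have [k _ kjS] := walk_meets_separator (@grid_adj_sym _) sepAB'
  (@grid_adj_col r j) (leq_ord i) (leq_ord i') ijA i'jB.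
by exists (inord k).
Qed.

Lemma card_small_side_grid (i0 j0 : 'I_r.+1) :
  cross i0 j0 \subset B' -> #|A'| <= #|A' :&: B'| ^ 2.
Proof.
move=> /subsetP crossB; set S := A' :&: B'.
have A'_sub : A' \subset setX [set h.1 | h in S] [set h.2 | h in S].
  apply/subsetP=> -[i j] ijA; rewrite inE /=; apply/andP; split.
  - have /(row_meets_separator ijA)[j'' ij''S] : (i, j0) \in B'.
      by apply: crossB; rewrite inE eqxx orbT.
    exact: (imset_f _ ij''S).
  - have /(col_meets_separator ijA)[i'' i''jS] : (i0, j) \in B'.
      by apply: crossB; rewrite inE eqxx.
    exact: (imset_f _ i''jS).
rewrite (leq_trans (subset_leq_card A'_sub)) // cardsX expnS expn1.
by rewrite leq_mul ?leq_imset_card.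
Qed.

End GridSeparation.

Lemma card_induced_separator r (V : finType) (e : rel V)
    (Vh : grid_vert r -> {set V}) (A B : {set V}) :
  symmetric e -> grid_minor_model e Vh -> separation e A B ->
  #|induced_set Vh A :&: induced_set Vh B| <= #|A :&: B|.
Proof.
move=> e_sym [disjVh [connVh _]] sepAB.
apply: (card_le_disjoint_meets disjVh) => h; rewrite !inE => /andP[hA hB].
exact: (connected_meets_separator e_sym sepAB (connVh h) hA hB).
Qed.

Theorem corollary5 (r : nat) (V : finType) (e : rel V)
    (Vh : grid_vert r -> {set V}) :
  0 < r -> symmetric e -> irreflexive e ->
  grid_minor_model e Vh ->
  forall A B : {set V}, tangle_extension e Vh A B ->
    #|[set h : grid_vert r | Vh h :&: A != set0]| <= (sep_order A B) ^ 2.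
Proof.
case: r Vh => [// | r] Vh _ e_sym _ model A B [sepAB [_ [sepAB' [_ [i0 [j0 crossB]]]]]].
rewrite -/(induced_set Vh A) (leq_trans (card_small_side_grid sepAB' crossB)) //.
by rewrite leq_exp2r //; apply: card_induced_separator.
Qed.
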